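(* Let $\mathbb{F}\in\{\mathbb{R},\mathbb{C}\}$, let $N\ge2$, $M\ge 2$ and $Q$ be integers with $1\le Q\le M-1$, write $\mathcal{M}=\{1,\dots,M\}$, let $0\le\epsilon\le1$, and let $\mathbf{H}_1,\dots,\mathbf{H}_M$ be $N\times N$ positive semidefinite matrices (real symmetric if $\mathbb{F}=\mathbb{R}$, Hermitian if $\mathbb{F}=\mathbb{C}$). Let $(\bar{\boldsymbol\beta},\bar{\mathbf{X}}^{(2)})$ be an optimal solution of the problem (SDP2): minimize $\mathrm{Tr}[\mathbf{X}^{(2)}]$ over $\boldsymbol\beta\in\mathbb{R}^M$ and $N\times N$ matrices $\mathbf{X}^{(2)}\succeq0$ (real symmetric if $\mathbb{F}=\mathbb{R}$, Hermitian if $\mathbb{F}=\mathbb{C}$) subject to $\mathrm{Tr}[\mathbf{H}_i\mathbf{X}^{(2)}]\ge\beta_i+(1-\beta_i)\epsilon$ for $i\in\mathcal{M}$, $\sum_{i\in\mathcal{M}}\beta_i=Q$, $0\le\beta_i\le1$ for $i\in\mathcal{M}$. Let $\bar{\boldsymbol\beta}_{[Q]}$ be the $Q$-th largest entry of $\bar{\boldsymbol\beta}$ and $\mathcal{I}=\{i\in\mathcal{M}:\bar{\boldsymbol\beta}[i]\ge\bar{\boldsymbol\beta}_{[Q]}\}$. Then $\bar{\boldsymbol\beta}[i]\ge\frac{1}{M-Q+1}$ for all $i\in\mathcal{I}$.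
   Context: $\bar{\boldsymbol\beta}[i]$ denotes the $i$-th entry of $\bar{\boldsymbol\beta}$. *)

From HB Require Import structures.
From mathcomp Require Import all_boot all_order all_algebra.
From mathcomp Require Import reals.
From mathcomp.real_closed Require Import complex.
Set Implicit Arguments. Unset Strict Implicit. Unset Printing Implicit Defensive.
Import Order.TTheory GRing.Theory Num.Theory.
Local Open Scope ring_scope.

(* Generic definitions over a scalar field F (F = R or F = R[i]) with a
   conjugation cj (id for R, conjc for R[i]) and the embedding emb : R -> F
   of the reals (id for R, x |-> x%:C for R[i]). *)
Section SDP2.
Context {R : realFieldType} {F : numDomainType} (cj : F -> F) (emb : R -> F).

Definition psdF (n : nat) (A : 'M[F]_n) : Prop :=
  A^T = map_mx cj A /\
  forall v : 'rV[F]_n, 0 <= (v *m A *m (map_mx cj v)^T) 0 0.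

Definition sdp2_feasible (N M Q : nat) (eps : R) (H : 'I_M -> 'M[F]_N)
    (beta : 'I_M -> R) (X : 'M[F]_N) : Prop :=
  [/\ psdF X,
      (forall i, emb (beta i + (1 - beta i) * eps) <= \tr (H i *m X)),
      \sum_(i < M) beta i = Q%:R &
      (forall i, 0 <= beta i <= 1)].

Definition sdp2_optimal (N M Q : nat) (eps : R) (H : 'I_M -> 'M[F]_N)
    (beta : 'I_M -> R) (X : 'M[F]_N) : Prop :=
  sdp2_feasible Q eps H beta X /\
  forall beta' X', sdp2_feasible Q eps H beta' X' -> \tr X <= \tr X'.
End SDP2.

(* beta_[k] : the k-th largest entry (k >= 1) of beta, counted with multiplicity *)
Definition kth_largest {R : realFieldType} (M : nat) (beta : 'I_M -> R) (k : nat) : R :=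
  nth 0 (sort >=%R [seq beta i | i <- enum 'I_M]) k.-1.

From HB Require Import structures.
From mathcomp Require Import all_boot all_order all_algebra.
From mathcomp Require Import reals.
From mathcomp.real_closed Require Import complex.
From mathcomp Require Import zify.
Import Order.TTheory GRing.Theory Num.Theory.
Local Open Scope ring_scope.

(* Only feasibility of beta matters.  The k largest entries are at most 1, so
   if they sum to at least k + 1, the remaining size s - k entries, each at
   most the (k+1)-th largest, carry a total of at least 1. *)

Lemma sorted_ge_nth_lower_bound (R : realFieldType) (s : seq R) (k : nat) :
  sorted >=%R s -> (k < size s)%N -> (forall x, x \in s -> x <= 1) ->
  k.+1%:R <= \sum_(x <- s) x -> 1 / (size s - k)%:R <= s`_k.
Proof.
move=> s_sorted lt_k_s le1 sum_ge.
have head_le : \sum_(0 <= j < k) s`_j <= k%:R.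
  rewrite -[k in X in _ <= X]subn0 -sumr_const_nat; apply: ler_sum_nat => j /andP[_ lt_jk].
  by apply: le1; rewrite mem_nth // (ltn_trans lt_jk).
have tail_le : \sum_(k <= j < size s) s`_j <= (size s - k)%:R * s`_k.
  rewrite -sumr_const_nat mulr_suml; apply: ler_sum_nat => j /andP[le_kj lt_js].
  rewrite mul1r; apply: (sorted_leq_nth ge_trans lexx 0 s_sorted);
    by rewrite ?inE ?(leq_ltn_trans le_kj).
rewrite (big_nth 0) (big_cat_nat (n := k)) ?(ltnW lt_k_s) //= in sum_ge.
rewrite ler_pdivrMr ?ltr0n ?subn_gt0 // mulrC; apply: le_trans tail_le.
by rewrite -(lerD2l k%:R) natr1 (le_trans sum_ge) // lerD2r.
Qed.

Lemma kth_largest_lower_bound (R : realFieldType) (M Q : nat) (beta : 'I_M -> R) :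
  (0 < Q <= M)%N -> (forall i, beta i <= 1) -> \sum_(i < M) beta i = Q%:R ->
  1 / (M - Q + 1)%:R <= kth_largest beta Q.
Proof.
move=> /andP[Q_gt0 le_QM] le1 sum_beta.
set s := sort >=%R [seq beta i | i <- enum 'I_M].
have size_s : size s = M by rewrite size_sort size_map size_enum_ord.
have -> : (M - Q + 1 = size s - Q.-1)%N by rewrite size_s; lia.
apply: sorted_ge_nth_lower_bound.
- by apply: sort_sorted => x y; apply: le_total.
- by rewrite size_s prednK.
- by move=> x; rewrite mem_sort => /mapP[i _ ->].
- rewrite prednK // -sum_beta (perm_big _ (permEl (perm_sort _ _))).
  by rewrite big_map big_enum.
Qed.

Lemma sdp2_feasible_kth_largest (R : realFieldType) (F : numDomainType)
    (cj : F -> F) (emb : R -> F) (N M Q : nat) (eps : R)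
    (H : 'I_M -> 'M[F]_N) (beta : 'I_M -> R) (X : 'M[F]_N) :
  (0 < Q <= M)%N -> sdp2_feasible cj emb Q eps H beta X ->
  forall i, kth_largest beta Q <= beta i -> 1 / (M - Q + 1)%:R <= beta i.
Proof.
move=> hQ [_ _ sum_beta beta01] i; apply: le_trans.
by apply: kth_largest_lower_bound sum_beta => // j; case/andP: (beta01 j).
Qed.

Theorem lemma2p3 (R : realType) (N M Q : nat) (eps : R) :
  (2 <= N)%N -> (2 <= M)%N -> (1 <= Q <= M - 1)%N -> 0 <= eps <= 1 ->
  (* case F = R *)
  (forall (H : 'I_M -> 'M[R]_N) (beta : 'I_M -> R) (X : 'M[R]_N),
     (forall i, psdF id (H i)) ->
     sdp2_optimal id id Q eps H beta X ->
     forall i, kth_largest beta Q <= beta i ->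
       1 / (M - Q + 1)%:R <= beta i) /\
  (* case F = C *)
  (forall (H : 'I_M -> 'M[R[i]]_N) (beta : 'I_M -> R) (X : 'M[R[i]]_N),
     (forall i, psdF (@conjc R) (H i)) ->
     sdp2_optimal (@conjc R) (real_complex R) Q eps H beta X ->
     forall i, kth_largest beta Q <= beta i ->
       1 / (M - Q + 1)%:R <= beta i).
Proof.
move=> _ _ hQ _.
have {}hQ : (0 < Q <= M)%N by move: hQ; lia.
by split=> H beta X _ [feas _]; apply: sdp2_feasible_kth_largest feas.
Qed.
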